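(* Let $c \geq 1$ and let $\Gamma \subset \mathbb{P}^c$ be a finite set of $d \geq 2c+1$ points in linear semi-uniform position. Then there exists a subset $\Gamma' \subset \Gamma$ of $2c+1$ points which spans $\mathbb{P}^c$ and is $3$-regular.
   Context: The ground field is algebraically closed of arbitrary characteristic. A finite set $\Gamma \subset \mathbb{P}^c$ is in linear semi-uniform position if it spans $\mathbb{P}^c$ and there are integers $\nu(i,\Gamma)$, $0 \leq i \leq c$, such that every $i$-dimensional linear subspace of $\mathbb{P}^c$ spanned by $i+1$ linearly independent points of $\Gamma$ contains exactly $\nu(i,\Gamma)$ points of $\Gamma$. A finite set $\Gamma'$ is $3$-regular if it is $3$-regular in the sense of Castelnuovo–Mumford, i.e. $H^1(\mathbb{P}^c, \mathcal{I}_{\Gamma'}(2)) = 0$; equivalently, $\Gamma'$ imposes independent conditions on quadrics, i.e. for each $p \in \Gamma'$ there is a quadric hypersurface containing $\Gamma' \setminus \{p\}$ but not $p$. *)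

From HB Require Import structures.
From mathcomp Require Import all_boot all_order all_algebra.
Set Implicit Arguments. Unset Strict Implicit. Unset Printing Implicit Defensive.
Import GRing.Theory.
Local Open Scope ring_scope.

(* Points of P^c are represented by nonzero row vectors in K^(c+1);
   a finite set of d points is a family G : 'I_d -> 'rV[K]_(c.+1) of nonzero
   vectors, pairwise non-proportional (distinct projective points). *)

Section Defs.
Variables (K : fieldType) (n d : nat).
Implicit Types (G : 'I_d -> 'rV[K]_n) (S : {set 'I_d}).

Definition proj_points G : Prop :=
  (forall i, G i != 0) /\ (forall i j, (G i == G j)%MS -> i = j).

Definition span_pts G S : 'M[K]_n := (\sum_(i in S) <<G i>>)%MS.

Definition spans_all G S : Prop := \rank (span_pts G S) = n.

Definition lin_indep_pts G S : Prop := \rank (span_pts G S) = #|S|.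

(* linear semi-uniform position in P^c, with n = c + 1 *)
Definition semi_uniform G : Prop :=
  spans_all G setT /\
  exists nu : nat -> nat, forall i : nat, (i < n)%N ->
    forall S, #|S| = i.+1 -> lin_indep_pts G S ->
      #|[set j | (G j <= span_pts G S)%MS]| = nu i.

(* value of the quadratic form x |-> x Q x^T (every homogeneous quadric
   polynomial in n variables is of this form) *)
Definition qform (Q : 'M[K]_n) (v : 'rV[K]_n) : K := (v *m Q *m v^T) 0 0.

(* 3-regularity: the points impose independent conditions on quadrics *)
Definition three_regular G S : Prop :=
  forall p, p \in S -> exists Q : 'M[K]_n,
    (forall q, q \in S -> q != p -> qform Q (G q) = 0) /\ qform Q (G p) != 0.

End Defs.

From HB Require Import structures.
From mathcomp Require Import all_boot all_order all_algebra.
From mathcomp Require Import zify.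
Set Implicit Arguments. Unset Strict Implicit. Unset Printing Implicit Defensive.
Import GRing.Theory.
Local Open Scope ring_scope.

(* By semi-uniformity the number N j of points of Γ on the span of j independent
   points of Γ is well defined; it is strictly increasing and, by
   inclusion-exclusion on two hyperplanes of such a span, convex.  Fix
   independent points p_1, ..., p_(c+1) and build by induction on r a 3-regular
   set of min(N r, 2r - 1) points spanning <p_1, ..., p_r>: the next set adds
   independent points of <p_1, ..., p_(r+1)> outside <p_1, ..., p_r>, and
   convexity of N guarantees that enough of them exist.  If h is a linear form
   vanishing on <p_1, ..., p_r>, the products of h with the forms dual to the
   new points separate each new point, and adding multiples of them to a
   quadric separating an old point kills its values at the new points.  For
   r = c + 1 we get min(d, 2c + 1) = 2c + 1 points. *)

Definition regular_size (N : nat -> nat) (r : nat) : nat := minn (N r) (2 * r - 1).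

Section ConvexSequence.
Local Open Scope nat_scope.
Variables (N : nat -> nat) (n : nat).
Hypothesis N0 : N 0 = 0.
Hypothesis N_incr : forall j, j < n -> N j < N j.+1.
Hypothesis N_convex : forall j, j.+2 <= n -> 2 * N j.+1 <= N j.+2 + N j.

Lemma convex_seq_ge j : j <= n -> j <= N j.
Proof. by elim: j => // j IH jn; have := N_incr jn; have := IH (ltnW jn); lia. Qed.

(* The increments are nondecreasing, so a unit increment forces all earlier
   increments to be units. *)
Lemma convex_seq_unit_step r : r < n -> N r.+1 <= N r + 1 -> N r <= r.
Proof.
elim: r => [|r IH] rn Hr; first by rewrite N0.
by have := N_convex rn; have := IH (ltnW rn); lia.
Qed.

Lemma convex_seq_growth s t : 2 <= s -> s + t <= n -> s < N s ->
  2 * (s + t) + 1 <= N (s + t) + s.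
Proof.
move=> s2; elim: t => [|t IH] stn Hs; first by rewrite addn0; lia.
rewrite addnS in stn *; have := IH (ltnW stn) Hs.
by have := N_incr stn; have := @convex_seq_unit_step (s + t) stn; lia.
Qed.

Lemma regular_size_step_le_incr r : r < n ->
  regular_size N r.+1 - regular_size N r <= N r.+1 - N r.
Proof.
move=> rn; have := N_incr rn; have := @convex_seq_unit_step r rn.
by have := convex_seq_ge (ltnW rn); rewrite /regular_size; lia.
Qed.

Lemma regular_size_step_le_excess r s : r < n -> 2 <= s <= r.+1 -> s < N s ->
  regular_size N r.+1 - regular_size N r <= s.
Proof.
move=> rn /andP[s2 sr] Hs; have := convex_seq_ge (ltnW rn); rewrite /regular_size.
have [sr'|] := leqP s r; last by lia.
by have := @convex_seq_growth s (r - s) s2; rewrite subnKC // => /(_ (ltnW rn) Hs); lia.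
Qed.

Lemma regular_size_step_gt0 r : r < n -> 0 < regular_size N r.+1 - regular_size N r.
Proof. by move=> rn; have := N_incr rn; rewrite /regular_size; lia. Qed.

End ConvexSequence.

Section Forms.
Variables (K : fieldType) (n : nat).
Implicit Types (v u : 'rV[K]_n) (w : 'cV[K]_n) (M Q : 'M[K]_n).

Definition lform w v : K := (v *m w) 0 0.

Lemma lformD w u v : lform w (u + v) = lform w u + lform w v.
Proof. by rewrite /lform mulmxDl mxE. Qed.

Lemma lformZ w a v : lform w (a *: v) = a * lform w v.
Proof. by rewrite /lform -scalemxAl mxE. Qed.

(* The columns of [cokermx M] span the linear forms vanishing on [M]. *)
Definition sep_form M v : 'cV[K]_n :=
  if [pick j | (v *m cokermx M) 0 j != 0] is Some j
  then cokermx M *m delta_mx j 0 else 0.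

Lemma lform_sep_form_eq0 M v u : (u <= M)%MS -> lform (sep_form M v) u = 0.
Proof.
rewrite submxE => /eqP uM; rewrite /sep_form /lform.
case: pickP => [j _|_]; last by rewrite mulmx0 mxE.
by rewrite mulmxA uM mul0mx mxE.
Qed.

Lemma lform_sep_form_neq0 M v : ~~ (v <= M)%MS -> lform (sep_form M v) v != 0.
Proof.
rewrite submxE => vM; rewrite /sep_form; case: pickP => [j vj|v0].
  by rewrite /lform mulmxA -colE mxE.
case/negP: vM; apply/eqP/matrixP => i j; rewrite ord1 [RHS]mxE.
by have /negbFE/eqP := v0 j.
Qed.

Lemma lform_sep_form_addsmx M v z : ~~ (v <= M)%MS -> (z <= v + M)%MS ->
  ~~ (z <= M)%MS -> lform (sep_form M v) z != 0.
Proof.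
move=> vM /sub_addsmxP[[a m] /= ->] zM.
rewrite lformD (lform_sep_form_eq0 _ (submxMl m M)) addr0 (mx11_scalar a) mul_scalar_mx.
rewrite lformZ mulf_neq0 ?lform_sep_form_neq0 //; apply: contra zM => /eqP a0.
by rewrite (mx11_scalar a) a0 mul_scalar_mx scale0r add0r submxMl.
Qed.

Lemma qformD Q1 Q2 v : qform (Q1 + Q2) v = qform Q1 v + qform Q2 v.
Proof. by rewrite /qform mulmxDr mulmxDl mxE. Qed.

Lemma qformZ a Q v : qform (a *: Q) v = a * qform Q v.
Proof. by rewrite /qform -scalemxAr -scalemxAl mxE. Qed.

Lemma qform_sum (I : finType) (P : pred I) (F : I -> 'M[K]_n) v :
  qform (\sum_(i | P i) F i) v = \sum_(i | P i) qform (F i) v.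
Proof.
apply: (big_morph (fun Q => qform Q v)) => [Q1 Q2|]; first exact: qformD.
by rewrite /qform mulmx0 mul0mx mxE.
Qed.

Lemma qform_lform_mul w1 w2 v : qform (w1 *m w2^T) v = lform w1 v * lform w2 v.
Proof.
rewrite /qform /lform mulmxA -(mulmxA (v *m w1)) -trmx_mul mxE big_ord1.
by congr (_ * _); rewrite [LHS]mxE.
Qed.
End Forms.

Section SpanPoints.
Variables (K : fieldType) (n d : nat) (G : 'I_d -> 'rV[K]_n).
Implicit Types (S T : {set 'I_d}).

Local Notation span := (span_pts G).
Local Notation indep := (lin_indep_pts G).

Definition on_span S : {set 'I_d} := [set j | (G j <= span S)%MS].

Lemma span_pts_subP S m (M : 'M_(m, n)) :
  reflect (forall i, i \in S -> (G i <= M)%MS) (span S <= M)%MS.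
Proof.
apply: (iffP sumsmx_subP) => H i iS; last by rewrite genmxE H.
by rewrite -(genmxE (G i)) H.
Qed.

Lemma span_pts_sup i S : i \in S -> (G i <= span S)%MS.
Proof. by move=> iS; apply: (sumsmx_sup i) => //; rewrite genmxE. Qed.

Lemma span_pts_mono S T : S \subset T -> (span S <= span T)%MS.
Proof. by move=> /subsetP ST; apply/span_pts_subP => i /ST/span_pts_sup. Qed.

Lemma span_pts_on_span S T : S \subset on_span T -> (span S <= span T)%MS.
Proof. by move=> /subsetP ST; apply/span_pts_subP => i /ST; rewrite inE. Qed.

Lemma span_pts0 : span set0 = 0.
Proof. by rewrite /span_pts big_set0. Qed.

Lemma on_span0 : (forall i, G i != 0) -> on_span set0 = set0.
Proof.
by move=> G_neq0; apply/setP => j; rewrite !inE span_pts0 submx0 (negbTE (G_neq0 j)).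
Qed.

Lemma span_ptsU S T : (span (S :|: T) == span S + span T)%MS.
Proof.
apply/andP; split; last by rewrite addsmx_sub !span_pts_mono ?subsetUl ?subsetUr.
apply/span_pts_subP => i; rewrite inE => /orP[] /span_pts_sup iS.
  exact: submx_trans iS (addsmxSl _ _).
exact: submx_trans iS (addsmxSr _ _).
Qed.

Lemma span_ptsD1 S a : a \in S -> (span S <= G a + span (S :\ a))%MS.
Proof.
move=> aS; apply/span_pts_subP => j jS; have [->|ja] := eqVneq j a.
  exact: addsmxSl.
by apply: submx_trans (addsmxSr _ _); apply: span_pts_sup; rewrite !inE ja.
Qed.

Lemma rank_span_pts_le S : (\rank (span S) <= #|S|)%N.
Proof.
apply: leq_trans (mxrank_sum_leqif _).1 _ => /=.
rewrite -sum1_card leq_sum // => i _.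
by rewrite genmxE rank_leq_row.
Qed.

Lemma sub_on_span S : S \subset on_span S.
Proof. by apply/subsetP => j jS; rewrite inE span_pts_sup. Qed.

Lemma on_span_mono S T : S \subset T -> on_span S \subset on_span T.
Proof.
move=> ST; apply/subsetP => j; rewrite !inE => jS.
exact: submx_trans jS (span_pts_mono ST).
Qed.

Lemma lin_indep_pts0 : indep set0.
Proof. by rewrite /lin_indep_pts span_pts0 mxrank0 cards0. Qed.

Lemma rank_span_pts_ltn S T x : S \subset T -> x \in T -> ~~ (G x <= span S)%MS ->
  (\rank (span S) < \rank (span T))%N.
Proof.
move=> ST xT xS; have sST := span_pts_mono ST.
rewrite ltn_neqAle (mxrank_leqif_sup sST).2 mxrankS // andbT.
by apply: contra xS => /(submx_trans _)->; rewrite ?span_pts_sup.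
Qed.

Lemma lin_indep_ptsU1 S x : indep S -> ~~ (G x <= span S)%MS -> indep (x |: S).
Proof.
move=> iS xS; have xnS : x \notin S by apply: contra xS => /span_pts_sup.
apply/eqP; rewrite eqn_leq rank_span_pts_le cardsU1 xnS add1n -iS /=.
by rewrite (rank_span_pts_ltn (subsetUr _ _) (setU11 x S)).
Qed.

Lemma lin_indep_ptsS S T : indep S -> T \subset S -> indep T.
Proof.
move=> iS TS; apply/eqP; rewrite eqn_leq rank_span_pts_le /=.
have : (\rank (span S) <= \rank (span T) + #|S :\: T|)%N.
  rewrite -{1}(setID S T) (setIidPr TS) (eqmx_rank (span_ptsU _ _)).
  by rewrite (leq_trans (mxrank_adds_leqif _ _).1) // leq_add2l rank_span_pts_le.
by rewrite iS -(cardsID T S) (setIidPr TS) leq_add2r.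
Qed.

Lemma lin_indep_pts_notin S x : indep S -> x \in S -> ~~ (G x <= span (S :\ x))%MS.
Proof.
move=> iS xS; apply/negP => xD.
have : (\rank (span S) <= \rank (span (S :\ x)))%N.
  by apply/mxrankS/(submx_trans (span_ptsD1 xS)); rewrite addsmx_sub xD submx_refl.
rewrite iS leqNgt (leq_ltn_trans (rank_span_pts_le _)) //.
by rewrite (cardsD1 x S) xS.
Qed.

Lemma span_pts_capmx S T I : indep I -> S \subset I -> T \subset I ->
  (span S :&: span T <= span (S :&: T))%MS.
Proof.
move=> iI SI TI; have indepI (U : {set _}) : U \subset I -> indep U := lin_indep_ptsS iI.
have sub : (span (S :&: T) <= span S :&: span T)%MS.
  by rewrite sub_capmx !span_pts_mono ?subsetIl ?subsetIr.
rewrite -(mxrank_leqif_sup sub).2; apply/eqP.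
have := mxrank_sum_cap (span S) (span T); rewrite -(eqmx_rank (span_ptsU _ _)).
rewrite (indepI _ SI) (indepI _ TI) (indepI _ (subset_trans (subsetIl S T) SI)).
rewrite (indepI (S :|: T)); last by rewrite subUset SI TI.
rewrite -(cardsUI S T); lia.
Qed.

Lemma on_spanI S T I : indep I -> S \subset I -> T \subset I ->
  on_span S :&: on_span T \subset on_span (S :&: T).
Proof.
move=> iI SI TI; apply/subsetP => j; rewrite !inE => /andP[jS jT].
by apply: submx_trans (span_pts_capmx iI SI TI); rewrite sub_capmx jS.
Qed.

Lemma greedy_lin_indep (X : {set 'I_d}) (k : nat) :
  exists2 J : {set 'I_d}, J \subset X /\ indep J &
    #|J| = k \/ (#|J| < k)%N /\ X \subset on_span J.
Proof.
elim: k => [|k [J [JX iJ] [Jk|[Jk XJ]]]].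
- by exists set0; [split; [exact: sub0set | exact: lin_indep_pts0] | left; rewrite cards0].
- have [XJ|/subsetPn[y yX nyJ]] := boolP (X \subset on_span J).
    by exists J => //; right; rewrite Jk ltnSn.
  have yJ : y \notin J by apply: contra nyJ; apply/subsetP/sub_on_span.
  exists (y |: J); last by left; rewrite cardsU1 yJ Jk.
  by rewrite subUset sub1set yX; split => //; apply: lin_indep_ptsU1; rewrite inE in nyJ.
- by exists J => //; right; split => //; apply: ltnW.
Qed.
End SpanPoints.

Section ThreeRegular.
Variables (K : fieldType) (n d : nat) (G : 'I_d -> 'rV[K]_n).
Implicit Types (Z Y : {set 'I_d}).

Local Notation span := (span_pts G).
Local Notation indep := (lin_indep_pts G).

Definition dual_form Y z : 'cV[K]_n := sep_form (span (Y :\ z)) (G z).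

Lemma lform_dual_form_eq0 Y z q : q \in Y -> q != z ->
  lform (dual_form Y z) (G q) = 0.
Proof. by move=> qY qz; rewrite lform_sep_form_eq0 // span_pts_sup // !inE qz. Qed.

Lemma lform_dual_form_neq0 Y z : indep Y -> z \in Y ->
  lform (dual_form Y z) (G z) != 0.
Proof. by move=> iY zY; rewrite lform_sep_form_neq0 // lin_indep_pts_notin. Qed.

(* [h * dual_form Y z] vanishes on [Z :|: Y] except at [z]; adding suitable
   multiples of these to a quadric for [Z] kills its values on [Y]. *)
Lemma three_regularU Z Y (h : 'cV[K]_n) :
  (forall q, q \in Z -> lform h (G q) = 0) ->
  (forall z, z \in Y -> lform h (G z) != 0) ->
  indep Y -> three_regular G Z -> three_regular G (Z :|: Y).
Proof.
move=> hZ hY iY tZ p; rewrite inE => /orP[pZ|pY]; last first.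
  exists (h *m (dual_form Y p)^T); split; last first.
    by rewrite qform_lform_mul mulf_neq0 ?hY ?lform_dual_form_neq0.
  move=> q; rewrite inE qform_lform_mul => /orP[qZ|qY] qp.
    by rewrite hZ ?mul0r.
  by rewrite lform_dual_form_eq0 ?mulr0.
have [Q [QZ Qp]] := tZ p pZ.
pose hw z := lform h (G z) * lform (dual_form Y z) (G z).
have hw_neq0 z : z \in Y -> hw z != 0.
  by move=> zY; rewrite mulf_neq0 ?hY ?lform_dual_form_neq0.
pose Q' := Q + \sum_(z in Y) (- qform Q (G z) / hw z) *: (h *m (dual_form Y z)^T).
have Q'E q : qform Q' (G q) = qform Q (G q) +
    \sum_(z in Y) (- qform Q (G z) / hw z) * (lform h (G q) * lform (dual_form Y z) (G q)).
  rewrite qformD qform_sum; congr (_ + _).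
  by apply: eq_bigr => z _; rewrite qformZ qform_lform_mul.
have Q'Z q : q \in Z -> qform Q' (G q) = qform Q (G q).
  by move=> qZ; rewrite Q'E big1 ?addr0 // => z _; rewrite hZ // mul0r mulr0.
exists Q'; split; last by rewrite Q'Z.
move=> q; rewrite inE => /orP[qZ|qY] qp; first by rewrite Q'Z ?QZ.
rewrite Q'E (bigD1 q) //= big1 ?addr0 => [|z /andP[zY zq]]; last first.
  by rewrite lform_dual_form_eq0 1?eq_sym ?mulr0.
by rewrite -mulrA mulVf ?hw_neq0 // mulr1 addrN.
Qed.
End ThreeRegular.

Section SemiUniform.
Variables (K : fieldType) (n d : nat) (G : 'I_d -> 'rV[K]_n).
Implicit Types (I J S : {set 'I_d}).

Local Notation span := (span_pts G).
Local Notation indep := (lin_indep_pts G).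
Local Notation on_span := (on_span G).

Hypothesis G_neq0 : forall i, G i != 0.
Hypothesis G_inj : forall i j, (G i == G j)%MS -> i = j.
Hypothesis G_full : \rank (span setT) = n.
Variable N : nat -> nat.
Hypothesis card_on_span : forall J, indep J -> #|on_span J| = N #|J|.

Lemma exists_lin_indep k : (k <= n)%N -> exists2 J, indep J & #|J| = k.
Proof.
move=> kn; have [J [_ iJ] [|[Jk /span_pts_on_span/mxrankS]]] :=
  greedy_lin_indep G setT k; first by exists J.
by rewrite G_full iJ; lia.
Qed.

Lemma lin_indep_ptsD1 I a : indep I -> a \in I ->
  indep (I :\ a) /\ #|I :\ a| = #|I|.-1.
Proof.
move=> iI aI; split; first exact: lin_indep_ptsS iI (subD1set I a).
by rewrite (cardsD1 a I) aI.
Qed.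

Lemma semi_uniform_count0 : N 0 = 0%N.
Proof.
rewrite -(cards0 'I_d) -card_on_span ?(on_span0 G_neq0) //; exact: lin_indep_pts0.
Qed.

Lemma semi_uniform_count1 : (1 <= n)%N -> N 1 = 1%N.
Proof.
move=> n1; have [J iJ /eqP/cards1P[j Jj]] := exists_lin_indep n1.
rewrite -(cards1 j) -Jj -card_on_span // Jj; apply: eq_card => i; rewrite !inE.
apply/idP/eqP => [ij|->]; last exact: span_pts_sup (set11 j).
have {}ij : (G i <= G j)%MS.
  by apply: submx_trans ij _; apply/span_pts_subP => k; rewrite inE => /eqP->.
by apply: G_inj; rewrite -(mxrank_leqif_eq ij).2 !rank_rV !G_neq0.
Qed.

Lemma semi_uniform_count_incr j : (j < n)%N -> (N j < N j.+1)%N.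
Proof.
move=> jn; have [I iI cI] := exists_lin_indep jn.
have [a aI] : exists a, a \in I by apply/set0Pn; rewrite -card_gt0 cI.
have [iIa cIa] := lin_indep_ptsD1 iI aI.
rewrite -cI; have -> : j = #|I :\ a| by rewrite cIa cI.
rewrite -(card_on_span iI) -(card_on_span iIa).
apply/proper_card/properP; split; first exact/on_span_mono/subD1set.
by exists a; rewrite inE; [apply: span_pts_sup | apply: lin_indep_pts_notin].
Qed.

(* Inclusion-exclusion for the points on two hyperplanes of the span of [j.+2]
   independent points; they meet in the span of [j] of them. *)
Lemma semi_uniform_count_convex j : (j.+2 <= n)%N -> (2 * N j.+1 <= N j.+2 + N j)%N.
Proof.
move=> jn; have [I iI cI] := exists_lin_indep jn.
have [a aI] : exists a, a \in I by apply/set0Pn; rewrite -card_gt0 cI.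
have [iIa cIa] := lin_indep_ptsD1 iI aI; rewrite cI /= in cIa.
have [x xIa] : exists x, x \in I :\ a by apply/set0Pn; rewrite -card_gt0 cIa.
have [iIax cIax] := lin_indep_ptsD1 iIa xIa; rewrite cIa /= in cIax.
have xI : x \in I by move: xIa; rewrite inE => /andP[].
have [iIx cIx] := lin_indep_ptsD1 iI xI; rewrite cI /= in cIx.
have Iax : (I :\ x) :&: (I :\ a) = I :\ a :\ x.
  by apply/setP => y; rewrite !inE; case: (y \in I); rewrite ?andbF ?andbT.
have sI : on_span (I :\ x) :|: on_span (I :\ a) \subset on_span I.
  by rewrite subUset !on_span_mono ?subD1set.
have sIax := on_spanI iI (subD1set I x) (subD1set I a); rewrite Iax in sIax.
have := cardsUI (on_span (I :\ x)) (on_span (I :\ a)).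
have := subset_leq_card sI; have := subset_leq_card sIax.
rewrite !card_on_span // cI cIx cIa cIax; lia.
Qed.

Lemma regular_size_gap_lin_indep I a : indep I -> a \in I -> (#|I| <= n)%N ->
  exists2 J : {set 'I_d}, J \subset on_span I :\: on_span (I :\ a) /\ indep J &
    #|J| = (regular_size N #|I| - regular_size N #|I|.-1)%N.
Proof.
move=> iI aI In; set X := _ :\: _.
have [iIa cIa] := lin_indep_ptsD1 iI aI.
have I1 : #|I| = #|I|.-1.+1 by rewrite (cardsD1 a I) aI.
have rn : (#|I|.-1 < n)%N by rewrite -I1.
have [J [JX iJ] [Jk|[Jk XJ]]] :=
  greedy_lin_indep G X (regular_size N #|I| - regular_size N #|I|.-1); first by exists J.
exfalso; have [XsubJ|/subsetPn[y yX yJ]] := boolP (X \subset J).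
  have XE : J = X by apply/eqP; rewrite eqEsubset JX XsubJ.
  have cX : #|X| = (N #|I| - N #|I|.-1)%N.
    by rewrite cardsD (setIidPr (on_span_mono _ (subD1set I a))) !card_on_span // cIa.
  move: Jk; rewrite XE cX I1 ltnNge => /negP; apply.
  exact: (regular_size_step_le_incr semi_uniform_count0 semi_uniform_count_incr
                                     semi_uniform_count_convex rn).
have JsubI : J \subset on_span I := subset_trans JX (subsetDl _ _).
have JN : (#|J| < N #|J|)%N.
  rewrite -card_on_span //; have := cardsU1 y J; rewrite yJ add1n => <-.
  by apply/subset_leq_card; rewrite subUset sub1set (subsetP XJ) ?sub_on_span.
have J2 : (2 <= #|J|)%N.
  case: #|J| JN => [|[|]] //; first by rewrite semi_uniform_count0.
  by rewrite semi_uniform_count1 // (leq_trans _ In) // I1.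
have JI : (#|J| <= #|I|)%N by rewrite -iJ -iI; exact/mxrankS/span_pts_on_span.
move: Jk; rewrite I1 ltnNge => /negP; apply.
apply: (regular_size_step_le_excess semi_uniform_count0 semi_uniform_count_incr
                                    semi_uniform_count_convex rn _ JN).
by rewrite J2 -I1.
Qed.

Lemma exists_three_regular_on_span r I : indep I -> #|I| = r -> (r <= n)%N ->
  exists Z : {set 'I_d}, [/\ Z \subset on_span I, three_regular G Z,
    \rank (span Z) = r & #|Z| = regular_size N r].
Proof.
elim: r I => [|r IH] I iI cI rn.
  exists set0; rewrite /regular_size semi_uniform_count0 cards0 span_pts0 mxrank0.
  by split => //; [exact: sub0set | move=> p; rewrite inE].
have [a aI] : exists a, a \in I by apply/set0Pn; rewrite -card_gt0 cI.
have [iIa cIa] := lin_indep_ptsD1 iI aI; rewrite cI /= in cIa.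
have [Z [ZIa tZ rZ cZ]] := IH _ iIa cIa (ltnW rn).
have In : (#|I| <= n)%N by rewrite cI.
have [J [JX iJ] cJ] := regular_size_gap_lin_indep iI aI In.
rewrite cI /= in cJ.
have IaI : on_span (I :\ a) \subset on_span I by apply/on_span_mono/subD1set.
have ZJI : Z :|: J \subset on_span I.
  by rewrite subUset (subset_trans ZIa IaI) (subset_trans JX (subsetDl _ _)).
have JnIa z : z \in J -> ~~ (G z <= span (I :\ a))%MS.
  by move/(subsetP JX); rewrite !inE => /andP[].
have gap_gt0 := regular_size_step_gt0 semi_uniform_count0 semi_uniform_count_incr rn.
have [z zJ] : exists z, z \in J by apply/set0Pn; rewrite -card_gt0 cJ.
exists (Z :|: J); split => //.
- pose h := sep_form (span (I :\ a)) (G a).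
  apply: (three_regularU (h := h)) => // [q qZ|q qJ].
    by apply: lform_sep_form_eq0; move/(subsetP ZIa): qZ; rewrite inE.
  apply: lform_sep_form_addsmx; rewrite ?lin_indep_pts_notin ?JnIa //.
  apply: submx_trans (span_ptsD1 G aI).
  by move/(subsetP (subset_trans JX (subsetDl _ _))): qJ; rewrite inE.
- apply/eqP; rewrite eqn_leq -{1}cI -iI (mxrankS (span_pts_on_span ZJI)) /= -rZ.
  apply: (rank_span_pts_ltn (subsetUl Z J) (_ : z \in Z :|: J)).
    by rewrite inE zJ orbT.
  by apply: contra (JnIa z zJ) => /submx_trans->; rewrite ?span_pts_on_span.
- have ZJ : Z :&: J = set0.
    apply/setP => q; rewrite !inE; apply/andP => -[qZ qJ].
    by move/(subsetP ZIa): qZ; rewrite inE (negbTE (JnIa q qJ)).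
  by rewrite cardsU ZJ cards0 subn0 cZ cJ subnKC // ltnW // -subn_gt0.
Qed.
End SemiUniform.

Theorem proposition2p1 (K : closedFieldType) (c d : nat)
    (G : 'I_d -> 'rV[K]_(c.+1)) :
  (1 <= c)%N -> (2 * c + 1 <= d)%N ->
  proj_points G -> semi_uniform G ->
  exists S : {set 'I_d},
    #|S| = (2 * c + 1)%N /\ spans_all G S /\ three_regular G S.
Proof.
move=> _ dc [G_neq0 G_inj] [G_full [nu nuP]].
pose N k := if k is k'.+1 then nu k' else 0%N.
have card_on_span J : lin_indep_pts G J -> #|on_span G J| = N #|J|.
  move=> iJ; case cJ: #|J| => [|k]; first by rewrite (cards0_eq cJ) on_span0 ?cards0.
  by apply: nuP; rewrite // -ltnS -cJ -iJ ltnS rank_leq_col.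
have [I iI cI] := exists_lin_indep G_full (leqnn c.+1).
have [Z [_ tZ rZ cZ]] :=
  exists_three_regular_on_span G_neq0 G_inj G_full card_on_span iI cI (leqnn _).
have on_spanI : on_span G I = setT.
  by apply/setP => j; rewrite !inE submx_full // /row_full iI cI.
have Nd : N c.+1 = d by rewrite -cI -card_on_span // on_spanI cardsT card_ord.
by exists Z; rewrite cZ /regular_size Nd; split; [lia | split].
Qed.
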